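(* Let $c$ be the minimum value such that $\Pr_\tau[S]\le c\,|S|$ for all intervals $S\subseteq[0,1]$ with $|S|\ge2\rho$. For any budget $K\le M$, run the LEA algorithm with $\gamma=\sqrt{V_{\mathcal U^*}/(8cM)}$ (so $\rho=\gamma\sqrt\epsilon$). Then it outputs a $(1-\epsilon,\delta)$-optimal allocation using $O\big(M\ln(2M/\delta)/\rho^2\big)$ samples.
   Context: A population is partitioned into $M$ units $u\in\{1,\dots,M\}$ with unknown treatment effects $\tau(u)\in[0,1]$, pairwise distinct. $\Pr_\tau[S]=|\{u:\tau(u)\in S\}|/M$. For budget $K\in\{1,\dots,M\}$, $\mathcal U^*$ is the set of the $K$ units with largest $\tau(u)$ and $V_{\mathcal U^*}=\sum_{u\in\mathcal U^*}\tau(u)$; an allocation $S$ of $K$ units is $(1-\epsilon,\delta)$-optimal if $\sum_{u\in S}\tau(u)\ge(1-\epsilon)V_{\mathcal U^*}$ with probability at least $1-\delta$. An estimation oracle, given $u$ and $\epsilon',\delta'$, returns $\hat\tau(u)$ with $|\hat\tau(u)-\tau(u)|\le\epsilon'$ with probability $\ge1-\delta'$ using $O(\ln(2/\delta')/\epsilon'^2)$ samples. The LEA algorithm: on input $M$ units, budget $K$, parameters $\epsilon,\delta,\gamma>0$, set $\rho=\gamma\sqrt\epsilon$, obtain for each unit $u$ a $(\rho,\delta/M)$-accurate estimate $\hat\tau(u)$ from the oracle, and output the $K$ units with the largest $\hat\tau(u)$. *)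

From HB Require Import structures.
From mathcomp Require Import all_boot all_order all_algebra.
From mathcomp Require Import all_classical all_reals all_analysis.
Set Implicit Arguments. Unset Strict Implicit. Unset Printing Implicit Defensive.
Import Order.TTheory GRing.Theory Num.Theory.
Local Open Scope ring_scope.

Definition Prtau {R : realType} {M : nat} (tau : 'I_M -> R) (S : interval R) : R :=
  #|[set u : 'I_M | tau u \in S]|%:R / M%:R.

Definition topK {R : realType} {M : nat} (f : 'I_M -> R) (K : nat)
  (A : {set 'I_M}) : Prop :=
  #|A| = K /\ (forall u v, u \in A -> v \notin A -> f v <= f u).

Definition itv_ab {R : realType} (bl : bool) (a : R) (br : bool) (b : R) : interval R :=
  Interval (BSide bl a) (BSide br b).

Definition density_bound {R : realType} {M : nat} (tau : 'I_M -> R) (rho c : R) : Prop :=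
  forall (bl br : bool) (a b : R), 0 <= a -> b <= 1 -> a <= b -> 2 * rho <= b - a ->
    Prtau tau (itv_ab bl a br b) <= c * (b - a).

Definition min_density_const {R : realType} {M : nat} (tau : 'I_M -> R) (rho c : R) : Prop :=
  density_bound tau rho c /\ (forall c', density_bound tau rho c' -> c <= c').

From HB Require Import structures.
From mathcomp Require Import all_boot all_order all_algebra.
From mathcomp Require Import all_classical all_reals all_analysis.
From mathcomp Require Import lra ring.
Import Order.TTheory GRing.Theory Num.Theory.
Local Open Scope ring_scope.

(** By the union bound, with probability at least 1 - delta all M oracle
    estimates are rho-accurate.  On that event, any unit u that the output S
    has in place of a unit v of the optimal set U* satisfies
    tau v - 2 rho <= tau u <= tau v, so the value lost is at most 2 rho times
    the number m of swaps.  All swapped-in units lie in one window of width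
    2 rho, so m <= 2 rho c M by the definition of c.  The loss is thus at most
    4 rho^2 c M, which the choice of gamma makes equal to eps V_U* / 2. *)

Lemma cardsD_sym (I : finType) (A B : {set I}) :
  #|A| = #|B| -> #|A :\: B| = #|B :\: A|.
Proof.
move=> AB; apply/eqP.
by rewrite -(eqn_add2l #|A :&: B|) cardsID (finset.setIC A B) cardsID AB.
Qed.

Lemma sum_exchange_le (R : realFieldType) (I : finType) (f : I -> R) (g : R)
    (A B : {set I}) :
  #|A| = #|B| -> (forall u v, u \in A -> v \in B -> f v <= f u + g) ->
  \sum_(v in B) f v - \sum_(u in A) f u <= g * #|A|%:R.
Proof.
move=> AB gap; have [A0|A_gt0] := posnP #|A|.
  have B0 : #|B| = 0%N by rewrite -AB.
  by rewrite (cards0_eq A0) (cards0_eq B0) !big_set0 subrr cards0 mulr0.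
have double : (\sum_(v in B) f v) *+ #|A| <= (\sum_(u in A) f u + g *+ #|A|) *+ #|B|.
  apply: (@le_trans _ _ (\sum_(u in A) (f u + g) *+ #|B|)).
    rewrite -sumr_const; apply: ler_sum => u uA; rewrite -sumr_const.
    by apply: ler_sum => v vB; apply: gap.
  by rewrite sumrMnl big_split /= sumr_const.
rewrite -AB ler_pMn2r // in double; rewrite -mulr_natr; lra.
Qed.

Section density.
Context {R : realType} {M : nat} {tau : 'I_M -> R} {rho c : R}.

Lemma min_density_const_rho_le : min_density_const tau rho c -> 2 * rho <= 1.
Proof.
move=> [_ c_min]; rewrite leNgt; apply/negP => rho_big.
have : density_bound tau rho (c - 1) by move=> bl br a b *; lra.
by move/c_min; lra.
Qed.

Lemma density_bound_ge0 : density_bound tau rho c -> 0 < rho -> 2 * rho <= 1 -> 0 <= c.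
Proof.
move=> dens rho_gt0 rho_le.
have Pr_le : Prtau tau (itv_ab true 0 false (2 * rho)) <= c * (2 * rho - 0).
  by apply: dens => //; lra.
have Pr_ge0 : 0 <= Prtau tau (itv_ab true 0 false (2 * rho)) by rewrite divr_ge0.
by have := le_trans Pr_ge0 Pr_le; rewrite subr0 pmulr_lge0 //; lra.
Qed.

Hypothesis tau01 : forall u, 0 <= tau u <= 1.

Lemma card_window_le (t : R) : density_bound tau rho c -> 0 < rho -> 2 * rho <= 1 ->
  (0 < M)%N -> t <= 1 -> #|[set u | t - 2 * rho <= tau u <= t]|%:R <= 2 * rho * c * M%:R.
Proof.
move=> dens rho_gt0 rho_le M_gt0 t_le1.
(* [a] is [max 0 (t - 2 * rho)]: the window slid to the right into [0, 1]. *)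
have [a [a_ge0 a_le a_ge a_min]] : exists a : R, [/\ 0 <= a, a + 2 * rho <= 1,
    t - 2 * rho <= a & forall x, 0 <= x -> t - 2 * rho <= x -> a <= x].
  by have [?|?] := lerP (2 * rho) t; [exists (t - 2 * rho) | exists 0]; split=> *; lra.
have window_sub : [set u | t - 2 * rho <= tau u <= t]
                  \subset [set u | tau u \in itv_ab true a false (a + 2 * rho)].
  apply/fintype.subsetP => u; rewrite !finset.in_set /itv_ab in_itv /= => /andP[lo hi].
  by have /andP[? ?] := tau01 u; apply/andP; split; [exact: a_min | lra].
have := dens true false a (a + 2 * rho) a_ge0 a_le ltac:(lra) ltac:(lra).
rewrite /Prtau ler_pdivrMr ?ltr0n // (_ : a + 2 * rho - a = 2 * rho); last by lra.
move=> Pr_le.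
rewrite (mulrC (2 * rho) c); apply: le_trans Pr_le.
by rewrite ler_nat subset_leq_card.
Qed.

End density.

Section topK.
Context {R : realType} {M K : nat} {tau f : 'I_M -> R} {U S : {set 'I_M}} {rho : R}.
Hypotheses (U_top : topK tau K U) (S_top : topK f K S).
Hypothesis f_near : forall u, `|f u - tau u| <= rho.

Lemma topK_exchange {u v} : u \in S :\: U -> v \in U :\: S ->
  tau u <= tau v <= tau u + 2 * rho.
Proof.
rewrite !inE => /andP[uU uS] /andP[vS vU].
have := f_near u; have := f_near v; rewrite !ler_distl => /andP[? ?] /andP[? ?].
have := U_top.2 v u vU uU; have := S_top.2 u v uS vS.
by move=> ? ?; apply/andP; split; lra.
Qed.

Lemma topK_cardsD : #|S :\: U| = #|U :\: S|.
Proof. by apply: cardsD_sym; rewrite S_top.1 U_top.1. Qed.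

Lemma topK_sum_gap :
  \sum_(u in U) tau u - \sum_(u in S) tau u <= 2 * rho * #|S :\: U|%:R.
Proof.
rewrite (big_setID S) [X in _ - X](big_setID U) (finset.setIC S U) /=.
rewrite opprD addrACA subrr add0r.
apply: sum_exchange_le; first exact: topK_cardsD.
by move=> u v uSU vUS; have /andP[] := topK_exchange uSU vUS.
Qed.

Context {c : R}.
Hypotheses (tau01 : forall u, 0 <= tau u <= 1) (dens : density_bound tau rho c).
Hypotheses (rho_gt0 : 0 < rho) (rho_le : 2 * rho <= 1) (M_gt0 : (0 < M)%N).

Lemma topK_cardsD_le : #|S :\: U|%:R <= 2 * rho * c * M%:R.
Proof.
have [US0|/card_gt0P[v vUS]] := posnP #|U :\: S|.
  have c_ge0 := density_bound_ge0 dens rho_gt0 rho_le.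
  by rewrite topK_cardsD US0 !mulr_ge0 ?ler0n ?(ltW rho_gt0).
have /andP[_ tau_v_le1] := tau01 v.
apply: le_trans _ (card_window_le tau01 _ dens rho_gt0 rho_le M_gt0 tau_v_le1).
rewrite ler_nat; apply: subset_leq_card; apply/fintype.subsetP => u uSU.
have /andP[? ?] := topK_exchange uSU vUS.
by rewrite finset.in_set; apply/andP; split; lra.
Qed.

Lemma topK_regret_le :
  \sum_(u in U) tau u - \sum_(u in S) tau u <= 4 * rho ^+ 2 * c * M%:R.
Proof.
apply: le_trans topK_sum_gap _.
rewrite (_ : 4 * rho ^+ 2 * c * M%:R = 2 * rho * (2 * rho * c * M%:R)); last by ring.
by rewrite ler_pM2l ?mulr_gt0 //; exact: topK_cardsD_le.
Qed.

End topK.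

Local Open Scope classical_set_scope.

Section union_bound.
Context {d : measure_display} {T : measurableType d} {R : realType}.
Variable P : probability T R.

Lemma probability_setI_ge {A B : set T} {a b : R} : measurable A -> measurable B ->
  (a%:E <= P A)%E -> (b%:E <= P B)%E -> ((a + b - 1)%:E <= P (A `&` B))%E.
Proof.
move=> mA mB.
have PU : P (A `|` B) = (P A + P B - P (A `&` B))%E.
  by apply: measureUfinl; rewrite ?ltey_eq ?fin_num_measure.
have := probability_le1 P (measurableU _ _ mA mB); rewrite PU.
have finP X : measurable X -> P X = (fine (P X))%:E.
  by move=> mX; rewrite fineK ?fin_num_measure.
rewrite (finP A) // (finP B) // (finP (A `&` B)); last exact: measurableI.
by rewrite -EFinN -!EFinD !lee_fin; lra.
Qed.

Lemma probability_bigcap_ge {I : choiceType} (s : seq I) (A : I -> set T) (q : R) :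
  (forall i, measurable (A i)) -> (forall i, ((1 - q)%:E <= P (A i))%E) ->
  ((1 - (size s)%:R * q)%:E <= P (\bigcap_(i in [set` s]) A i))%E.
Proof.
move=> mA PA; rewrite bigcap_seq; elim: s => [|i s IHs].
  by rewrite big_nil probability_setT mul0r subr0.
rewrite big_cons; apply: le_trans _ (probability_setI_ge (mA i) _ (PA i) IHs).
  by rewrite lee_fin /= -addn1 natrD; lra.
by apply: bigsetI_measurable.
Qed.

End union_bound.

Lemma sqr_radius_budget {R : rcfType} {V c m eps gamma rho : R} :
  gamma = Num.sqrt (V / (8 * c * m)) -> 0 < gamma -> 0 < eps ->
  rho = gamma * Num.sqrt eps -> 4 * rho ^+ 2 * c * m = eps * V / 2.
Proof.
move=> gammaE gamma_gt0 eps_gt0 ->.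
have x_gt0 : 0 < V / (8 * c * m) by rewrite -sqrtr_gt0 -gammaE.
have : 8 * c * m != 0 by apply: contraTneq x_gt0 => ->; rewrite invr0 mulr0 ltxx.
rewrite !mulf_eq0 !negb_or => /andP[/andP[_ c_neq0] m_neq0].
rewrite gammaE exprMn !sqr_sqrtr ?(ltW x_gt0) ?(ltW eps_gt0) //.
by field; rewrite m_neq0 c_neq0.
Qed.

Lemma sum_samples_le {R : realType} {M : nat} (n : 'I_M -> nat) (Cor rho delta : R) :
  (forall u, (n u)%:R <= Cor * ln (2 / (delta / M%:R)) / rho ^+ 2) ->
  \sum_(u < M) (n u)%:R <= Cor * M%:R * ln (2 * M%:R / delta) / rho ^+ 2.
Proof.
move=> n_le; apply: le_trans (ler_sum _ (fun u _ => n_le u)) _.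
by rewrite sumr_const card_ord -[_ *+ M]mulr_natl invf_div !mulrA (mulrC _ Cor).
Qed.

Section measurable_events.
Context {d : measure_display} {T : measurableType d} {R : realType}.

Lemma measurable_dist_le (f : T -> R) (t e : R) :
  measurable_fun setT f -> measurable [set w | `|f w - t| <= e].
Proof.
move=> mf; have := mf measurableT _ (measurable_itv `[t - e, t + e]%R).
rewrite setTI; congr measurable; apply/seteqP; split => w /=;
  by rewrite in_itv /= ler_distl.
Qed.

Lemma measurable_fin_preimage {I : finType} (g : T -> I) (Q : set I) :
  (forall i, measurable [set w | g w = i]) -> measurable [set w | Q (g w)].
Proof.
move=> mg; have -> : [set w | Q (g w)] = \bigcup_(i in Q) [set w | g w = i].
  by apply/seteqP; split => [w Qgw | w [i Qi gwi]] /=; [exists (g w) | rewrite gwi].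
by apply: fin_bigcup_measurable => //; exact: finite_finset.
Qed.

End measurable_events.

Theorem theorem4 (R : realType) (d : measure_display) (T : measurableType d)
  (P : probability T R)
  (M K : nat) (tau : 'I_M -> R) (Ustar : {set 'I_M})
  (eps delta c gamma rho : R)
  (* estimation oracle: est e' d' u is the returned estimate of tau u *)
  (est : R -> R -> 'I_M -> T -> R)
  (* samples e' d' u = number of samples used by that oracle call *)
  (samples : R -> R -> 'I_M -> nat) (Cor : R)
  (* output of LEA: K units of largest estimate (any tie-breaking) *)
  (sel : T -> {set 'I_M}) :
  (0 < K)%N -> (K <= M)%N ->
  (forall u, 0 <= tau u <= 1) -> injective tau ->
  topK tau K Ustar ->
  0 < eps -> 0 < delta < 1 ->
  (* oracle guarantees *)
  (forall e' d' u, measurable_fun setT (est e' d' u)) ->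
  (forall e' d' u, 0 < e' -> 0 < d' <= 1 ->
     ((1 - d')%:E <= P [set w : T | (`|est e' d' u w - tau u| <= e')%R])%E) ->
  0 < Cor ->
  (forall e' d' u, 0 < e' -> 0 < d' <= 1 ->
     (samples e' d' u)%:R <= Cor * ln (2 / d') / e' ^+ 2) ->
  (* parameters of the theorem *)
  min_density_const tau rho c ->
  gamma = Num.sqrt ((\sum_(u in Ustar) tau u) / (8 * c * M%:R)) ->
  0 < gamma ->
  rho = gamma * Num.sqrt eps ->
  (* LEA output *)
  (forall w, topK (fun u => est rho (delta / M%:R) u w) K (sel w)) ->
  (forall A, measurable [set w : T | sel w = A]) ->
  ((1 - delta)%:E <=
     P [set w : T | ((1 - eps) * (\sum_(u in Ustar) tau u) <= \sum_(u in sel w) tau u)%R])%E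
  /\
  \sum_(u < M) (samples rho (delta / M%:R) u)%:R
     <= Cor * M%:R * ln (2 * M%:R / delta) / rho ^+ 2.
Proof.
move=> K_gt0 K_le_M tau01 _ U_top eps_gt0 /andP[delta_gt0 delta_lt1] est_meas est_acc
  _ samples_le [dens c_min] gammaE gamma_gt0 rhoE sel_top sel_meas.
have M_gt0 : (0 < M)%N := leq_trans K_gt0 K_le_M.
have rho_gt0 : 0 < rho by rewrite rhoE mulr_gt0 // sqrtr_gt0.
set q := delta / M%:R.
have q01 : 0 < q <= 1.
  rewrite divr_gt0 ?ltr0n // ler_pdivrMr ?ltr0n // mul1r.
  by rewrite (le_trans (ltW delta_lt1)) ?ler1n.
split; last by apply: sum_samples_le => u; apply: samples_le.
set V := \sum_(u in Ustar) tau u in gammaE *.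
pose accurate u := [set w | `|est rho q u w - tau u| <= rho].
have accurate_meas u : measurable (accurate u) :=
  measurable_dist_le _ _ _ (est_meas _ _ u).
have := probability_bigcap_ge P (enum 'I_M) _ q accurate_meas
  (fun u => est_acc _ _ u rho_gt0 q01).
rewrite size_enum_ord /q mulrC divfK ?gt_eqF ?ltr0n // => /le_trans; apply.
pose near_optimal (B : {set 'I_M}) := (1 - eps) * V <= \sum_(u in B) tau u.
apply: le_measure; rewrite ?inE.
- by rewrite bigcap_seq; exact: bigsetI_measurable.
- exact: (measurable_fin_preimage _ near_optimal sel_meas).
- move=> w all_accurate /=.
  have near u : `|est rho q u w - tau u| <= rho.
    by apply: all_accurate; rewrite /= mem_enum.
  have := topK_regret_le U_top (sel_top w) near tau01 dens rho_gt0
    (min_density_const_rho_le (conj dens c_min)) M_gt0.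
  have V_ge0 : 0 <= V by apply: sumr_ge0 => u _; have /andP[] := tau01 u.
  have := mulr_ge0 (ltW eps_gt0) V_ge0.
  by rewrite (sqr_radius_budget gammaE gamma_gt0 eps_gt0 rhoE) -/V; lra.
Qed.
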